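(* Let $\mathcal P$ be a typical heptagonal $7$-configuration. Then there is at most one point $p\in\mathcal P$ with dominance index $d(p)=6$, and at most one point $p\in\mathcal P$ with $d(p)=0$.
   Context: A $7$-configuration is a set of $7$ distinct points in $\mathbb{RP}^2$; it is typical if no three of its points are collinear and no six of them lie on a common conic. It is heptagonal if there is a line $\ell$ disjoint from it such that its points are the vertices of a convex heptagon in the affine plane $\mathbb{RP}^2\smallsetminus\ell$. For distinct $p,q\in\mathcal P$, let $Q_{p,q}$ be the conic through the five points of $\mathcal P\smallsetminus\{p,q\}$; ''inside'' a nonsingular conic means the component of its complement homeomorphic to a disc, ''outside'' the other one. The dominance index $d(p)$ of $p$ is the number of $q\in\mathcal P\smallsetminus\{p\}$ such that $p$ lies outside $Q_{p,q}$. *)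

From HB Require Import structures.
From mathcomp Require Import all_boot all_order all_algebra.
From mathcomp Require Import boolp reals.
Set Implicit Arguments. Unset Strict Implicit. Unset Printing Implicit Defensive.
Import Order.TTheory GRing.Theory Num.Theory.
Local Open Scope ring_scope.

(* Points of RP^2 are represented by nonzero row vectors of R^3
   (homogeneous coordinates); a 7-configuration is indexed by 'I_7. *)
Section Defs.
Variable R : realType.
Notation vec := 'rV[R]_3.

Definition qf (M : 'M[R]_3) (x : vec) : R := (x *m M *m x^T) 0 0.

(* a conic = zero locus of a nonzero quadratic form (symmetric matrix) *)
Definition is_conic (M : 'M[R]_3) : Prop := M^T = M /\ M <> 0.

Definition mx3 (u v w : vec) : 'M[R]_3 := col_mx u (col_mx v w).

Definition collinear3 (u v w : vec) : Prop := \det (mx3 u v w) = 0.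

Definition same_point (u v : vec) : Prop := exists c : R, u = c *: v.

Definition config7 (P : 'I_7 -> vec) : Prop :=
  (forall i, P i <> 0) /\
  (forall i j, i <> j -> ~ same_point (P i) (P j)).

Definition typical (P : 'I_7 -> vec) : Prop :=
  config7 P /\
  (forall i j k, i <> j -> j <> k -> i <> k -> ~ collinear3 (P i) (P j) (P k)) /\
  (forall i (M : 'M[R]_3), is_conic M -> ~ (forall k, k <> i -> qf M (P k) = 0)).

(* affine chart R P^2 \ {a.x = 0}, realised as the affine plane {y | a.y = 1}
   of R^3 : the point x (with a.x <> 0) is sent to (a.x)^-1 x. *)
Definition lin (a x : vec) : R := (x *m a^T) 0 0.
Definition chart (a x : vec) : vec := (lin a x)^-1 *: x.

Definition convex_position (Q : 'I_7 -> vec) : Prop :=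
  forall i, ~ exists w : 'I_7 -> R,
      (forall j, 0 <= w j) /\ w i = 0 /\ \sum_j w j = 1 /\
      \sum_j w j *: Q j = Q i.

(* heptagonal: some line l = {a.x = 0} misses P, and in the affine plane
   RP^2 \ l the seven points are the vertices of a convex heptagon *)
Definition heptagonal (P : 'I_7 -> vec) : Prop :=
  exists a : vec, (forall i, lin a (P i) <> 0) /\
    convex_position (fun i => chart a (P i)).

(* A nonsingular real
   conic with a real point has signature (2,1) or (1,2); its disc component
   (inside) is where the form has the sign of the eigenvalue of multiplicity
   one, i.e. the sign of det M (e.g. x^2+y^2-z^2: inside = {x^2+y^2<z^2}). *)
Definition inside_conic (M : 'M[R]_3) (x : vec) : Prop :=
  \det M <> 0 /\ 0 < qf M x * \det M.
Definition outside_conic (M : 'M[R]_3) (x : vec) : Prop :=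
  \det M <> 0 /\ qf M x * \det M < 0.

(* p lies outside Q_{p,q}, the conic through the five points of P \ {p,q}
   (unique up to scaling for a typical configuration) *)
Definition outside_Q (P : 'I_7 -> vec) (p q : 'I_7) : Prop :=
  exists M : 'M[R]_3, is_conic M /\
    (forall k, k <> p -> k <> q -> qf M (P k) = 0) /\
    outside_conic M (P p).

Definition dominance (P : 'I_7 -> vec) (p : 'I_7) : nat :=
  #|[set q : 'I_7 | (q != p) && `[< outside_Q P p q >] ]|.

End Defs.

(* Work in the affine chart in which the points form a convex heptagon.  Convexity
   makes the product of the four brackets of any four of the points positive.
   Given p <> p', the five brackets [p p' t] of the other points are nonzero, so
   four of them have a positive product; let q be the fifth point.  In the frame of
   three of the four remaining points, a conic through the frame is a vector
   orthogonal to the quadratic Cremona images of its other points, and an explicit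
   computation shows that the sign of (value at p * determinant) for Q_{p,q} times
   the same quantity at p' for Q_{p',q} is minus a square times four-point bracket
   products.  Hence p lies outside Q_{p,q} exactly when p' does not lie outside
   Q_{p',q}, which rules out two points of dominance index 6, or two of index 0. *)

From HB Require Import structures.
From mathcomp Require Import all_boot all_order all_algebra.
From mathcomp Require Import boolp reals ring lra.
Set Implicit Arguments. Unset Strict Implicit. Unset Printing Implicit Defensive.
Import Order.TTheory GRing.Theory Num.Theory.
Local Open Scope ring_scope.

(* Closes goals [x != y] and [uniq s] whose entries are distinct by [H : uniq _]. *)
Ltac distinct_from H :=
  let U := fresh "U" in
  have U := H; rewrite /= ?inE ?negb_or in U;
  repeat match goal with h : is_true (_ && _) |- _ => case/andP: h => ? ? end;
  rewrite /= ?inE ?negb_or; repeat (apply/andP; split); by [ | rewrite eq_sym].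

Section Signs.
Variable R : realFieldType.
Implicit Types a b c d : R.

Definition same_sign3 a b c := (0 < a /\ 0 < b /\ 0 < c) \/ (a < 0 /\ b < 0 /\ c < 0).

Lemma prod4_lt0_same_sign3 a b c d :
  a != 0 -> b != 0 -> c != 0 -> d != 0 -> a * b * c * d < 0 ->
  [\/ same_sign3 a b c, same_sign3 a b d, same_sign3 a c d | same_sign3 b c d].
Proof.
rewrite /same_sign3 !neq_lt => /orP[]ha /orP[]hb /orP[]hc /orP[]hd.
all: rewrite -sgr_lt0 !sgrM.
all: try rewrite (ltr0_sg ha); try rewrite (gtr0_sg ha); try rewrite (ltr0_sg hb);
  try rewrite (gtr0_sg hb); try rewrite (ltr0_sg hc); try rewrite (gtr0_sg hc);
  try rewrite (ltr0_sg hd); try rewrite (gtr0_sg hd).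
all: move=> hp; first [by exfalso; lra | by constructor 1; tauto | by constructor 2; tauto
  | by constructor 3; tauto | by constructor 4; tauto].
Qed.

Section Products.
Variable T : eqType.

Lemma sgr_prod_lt0 (f : T -> R) (s : seq T) :
  all (fun t => f t < 0) s -> Num.sg (\prod_(t <- s) f t) = (-1) ^+ size s.
Proof.
elim: s => [|t s IH] /=; first by rewrite big_nil sgr1.
by case/andP=> ht hs; rewrite big_cons sgrM (ltr0_sg ht) IH // exprS.
Qed.

(* If all [p * f q] were negative, their product would be both a negative
   product of an odd number of factors and the even power [p ^+ (size s).+1]. *)
Lemma exists_rem_prod_gt0 (f : T -> R) (s : seq T) :
  odd (size s) -> all (fun t => f t != 0) s ->
  exists2 q, q \in s & 0 < \prod_(t <- rem q s) f t.
Proof.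
move=> odd_s nz_s; pose p := \prod_(t <- s) f t.
have p_neq0 : p != 0 by rewrite prodf_seq_neq0.
have /hasP[q qs pq_gt0] : has (fun q => 0 < p * f q) s.
  apply/negPn/negP => /hasPn pq_le0.
  have pq_lt0 : all (fun t => p * f t < 0) s.
    apply/allP => t ts; rewrite lt_neqAle mulf_eq0 negb_or p_neq0 (allP nz_s) //.
    by rewrite leNgt pq_le0.
  have p_pow_gt0 : 0 < p ^+ (size s).+1 by rewrite exprn_even_gt0 /= ?negbK ?p_neq0 ?orbT.
  have := sgr_prod_lt0 pq_lt0.
  rewrite big_split /= big_const_seq count_predT iter_mulr_1 -exprSr -signr_odd odd_s.
  by rewrite (gtr0_sg p_pow_gt0) expr1 => ?; lra.
exists q => //; move: pq_gt0.
rewrite /p (perm_big _ (perm_to_rem qs)) big_cons /= mulrAC -expr2 pmulr_rgt0 //.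
by rewrite exprn_even_gt0 // (allP nz_s) ?orbT.
Qed.

End Products.
End Signs.

Section ThreeSpace.
Variable R : comNzRingType.
Implicit Types (u v w x y z : 'rV[R]_3) (M : 'M[R]_3).

Definition vec3 (a b c : R) : 'rV[R]_3 := \row_(i < 3) [:: a; b; c]`_i.
Definition dot u v : R := (u *m v^T) 0 0.
Definition cross u v : 'rV[R]_3 :=
  vec3 (u 0 1 * v 0 2 - u 0 2 * v 0 1) (u 0 2 * v 0 0 - u 0 0 * v 0 2)
       (u 0 0 * v 0 1 - u 0 1 * v 0 0).
Definition bracket u v w : R := dot u (cross v w).
Definition prod3 u : R := u 0 0 * u 0 1 * u 0 2.
Definition bform M x y : R := (x *m M *m y^T) 0 0.
Definition quad x y u v : R :=
  bracket x y u * bracket x y v * bracket x u v * bracket y u v.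

Lemma vec3E0 (a b c : R) : vec3 a b c 0 0 = a. Proof. by rewrite mxE. Qed.
Lemma vec3E1 (a b c : R) : vec3 a b c 0 1 = b. Proof. by rewrite mxE. Qed.
Lemma vec3E2 (a b c : R) : vec3 a b c 0 2 = c. Proof. by rewrite mxE. Qed.
Definition vec3E := (vec3E0, vec3E1, vec3E2).

Lemma ord3E : [/\ ord0 = 0 :> 'I_3, lift ord0 ord0 = 1 :> 'I_3
  & lift ord0 (lift ord0 ord0) = 2 :> 'I_3].
Proof. by split; apply/val_inj. Qed.

Lemma row3P u v : u 0 0 = v 0 0 -> u 0 1 = v 0 1 -> u 0 2 = v 0 2 -> u = v.
Proof.
move=> e0 e1 e2; apply/rowP => -[[|[|[|//]]] hi].
- by rewrite (_ : Ordinal hi = 0) //; apply/val_inj.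
- by rewrite (_ : Ordinal hi = 1) //; apply/val_inj.
- by rewrite (_ : Ordinal hi = 2) //; apply/val_inj.
Qed.

Lemma dotE u v : dot u v = u 0 0 * v 0 0 + u 0 1 * v 0 1 + u 0 2 * v 0 2.
Proof.
have [e0 e1 e2] := ord3E.
by rewrite /dot mxE !big_ord_recl big_ord0 !mxE addr0 addrA e0 e1 e2.
Qed.

Lemma bracketE u v w : bracket u v w =
  u 0 0 * (v 0 1 * w 0 2 - v 0 2 * w 0 1) + u 0 1 * (v 0 2 * w 0 0 - v 0 0 * w 0 2)
  + u 0 2 * (v 0 0 * w 0 1 - v 0 1 * w 0 0).
Proof. by rewrite /bracket dotE /cross !vec3E. Qed.

Lemma bformE M x y : bform M x y =
  x 0 0 * (M 0 0 * y 0 0 + M 0 1 * y 0 1 + M 0 2 * y 0 2) +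
  x 0 1 * (M 1 0 * y 0 0 + M 1 1 * y 0 1 + M 1 2 * y 0 2) +
  x 0 2 * (M 2 0 * y 0 0 + M 2 1 * y 0 1 + M 2 2 * y 0 2).
Proof.
have [e0 e1 e2] := ord3E.
rewrite /bform !mxE !big_ord_recl !big_ord0 !mxE !big_ord_recl !big_ord0 !addr0 e0 e1 e2; ring.
Qed.

Lemma det3E (A : 'M[R]_3) : \det A =
  A 0 0 * (A 1 1 * A 2 2 - A 1 2 * A 2 1) - A 0 1 * (A 1 0 * A 2 2 - A 1 2 * A 2 0)
  + A 0 2 * (A 1 0 * A 2 1 - A 1 1 * A 2 0).
Proof.
have det2 (B : 'M[R]_2) : \det B = B 0 0 * B 1 1 - B 0 1 * B 1 0.
  pose f (i j : nat) := B (inord i) (inord j).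
  have -> : B = \matrix_(i, j) f i j by apply/matrixP => i j; rewrite mxE /f !inord_val.
  rewrite (expand_det_row _ 0) !big_ord_recl big_ord0 /cofactor !det_mx11 !mxE /=.
  rewrite /bump /=; ring.
pose f (i j : nat) := A (inord i) (inord j).
have -> : A = \matrix_(i, j) f i j by apply/matrixP => i j; rewrite mxE /f !inord_val.
rewrite (expand_det_row _ 0) !big_ord_recl big_ord0 /cofactor !det2 !mxE /=.
rewrite /bump /=; ring.
Qed.

Lemma bracketZ c1 c2 c3 u v w :
  bracket (c1 *: u) (c2 *: v) (c3 *: w) = c1 * c2 * c3 * bracket u v w.
Proof. by rewrite !bracketE !mxE; ring. Qed.

Lemma dot_crossC u v w : dot (cross u v) w = - dot (cross u w) v.
Proof. by rewrite !dotE /cross !vec3E; ring. Qed.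

Lemma cramer_relation u v w z :
  bracket v w z *: u - bracket u w z *: v + bracket u v z *: w - bracket u v w *: z = 0.
Proof. by apply: row3P; rewrite !mxE !bracketE; ring. Qed.

(* Lagrange's identity [(a x b) x c = b (a.c) - a (b.c)] in disguise. *)
Lemma cross_parallel b u v : dot b u = 0 -> dot b v = 0 ->
  dot (cross u v) (cross u v) *: b = dot b (cross u v) *: cross u v.
Proof.
move=> bu bv; set n := cross u v.
have E : dot n n *: b - dot b n *: n = (dot b u * dot v v - dot b v * dot u v) *: u
                                      + (dot b v * dot u u - dot b u * dot u v) *: v.
  by apply: row3P; rewrite !mxE /n /cross !dotE !vec3E /=; ring.
by apply/eqP; rewrite -subr_eq0 E bu bv !(mul0r, subr0, scale0r, addr0).
Qed.

Lemma dot_prod3_parallel b u v w : dot b u = 0 -> dot b v = 0 ->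
  dot (cross u v) (cross u v) ^+ 4 * (dot b w * prod3 b)
  = dot b (cross u v) ^+ 4 * (dot (cross u v) w * prod3 (cross u v)).
Proof.
move=> /cross_parallel/[apply]; set n := cross u v => E.
have -> : dot n n ^+ 4 * (dot b w * prod3 b) = dot (dot n n *: b) w * prod3 (dot n n *: b).
  by rewrite !dotE /prod3 !mxE; ring.
by rewrite E !dotE /prod3 !mxE; ring.
Qed.

Lemma dotZl c u v : dot (c *: u) v = c * dot u v.
Proof. by rewrite !dotE !mxE; ring. Qed.

Lemma prod3Z c u : prod3 (c *: u) = c ^+ 3 * prod3 u.
Proof. by rewrite /prod3 !mxE; ring. Qed.

Lemma dot_cross_l u v : dot (cross u v) u = 0.
Proof. by rewrite dotE /cross !vec3E; ring. Qed.

Lemma dot_cross_r u v : dot (cross u v) v = 0.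
Proof. by rewrite dotE /cross !vec3E; ring. Qed.

Lemma bform_rows M (U : 'M[R]_3) (a b : 'I_3) :
  (U *m M *m U^T) a b = bform M (row a U) (row b U).
Proof.
rewrite /bform !mxE; apply: eq_bigr => i _; rewrite !mxE; congr (_ * _).
by apply: eq_bigr => t _; rewrite !mxE.
Qed.

Section Frame.
Variables j k l : 'rV[R]_3.
Local Notation D := (bracket j k l).

(* With [z = ζ0 j + ζ1 k + ζ2 l], [bracket z k l = D ζ0] etc., so [cremona z] is
   [D^2 (ζ0 ζ1, ζ0 ζ2, ζ1 ζ2)]: the quadratic Cremona transform based at [j, k, l]. *)
Definition cremona z : 'rV[R]_3 :=
  vec3 (bracket z k l * bracket z l j) (bracket z k l * bracket z j k)
       (bracket z l j * bracket z j k).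

Definition conic_coords M : 'rV[R]_3 := vec3 (bform M j k) (bform M j l) (bform M k l).

Lemma cross_cremona m z : cross (cremona m) (cremona z) =
  vec3 (bracket m j k * bracket z j k * (D * bracket z l m))
       (bracket m l j * bracket z l j * (D * bracket z k m))
       (bracket m k l * bracket z k l * (D * bracket z j m)).
Proof.
have P0 : bracket m k l * bracket z l j - bracket m l j * bracket z k l = D * bracket z l m.
  by rewrite !bracketE; ring.
have P1 : bracket m j k * bracket z k l - bracket m k l * bracket z j k = D * bracket z k m.
  by rewrite !bracketE; ring.
have P2 : bracket m l j * bracket z j k - bracket m j k * bracket z l j = D * bracket z j m.
  by rewrite !bracketE; ring.
by rewrite /cross /cremona !vec3E -P0 -P1 -P2; congr vec3; ring.
Qed.

Lemma prod3_cross_cremona m x y :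
  prod3 (cross (cremona m) (cremona y)) * prod3 (cross (cremona m) (cremona x))
    * (bracket x y j * bracket x y k * bracket x y l * bracket x y m) ^+ 3
  = (bracket m j k * bracket m l j * bracket m k l * D ^+ 3) ^+ 2
    * (quad x y k l * quad x y l j * quad x y j k * quad x y j m * quad x y k m * quad x y l m).
Proof. by rewrite !cross_cremona /prod3 !vec3E /quad; ring. Qed.

Variable M : 'M[R]_3.
Hypotheses (M_sym : M^T = M) (Mj : bform M j j = 0) (Mk : bform M k k = 0)
  (Ml : bform M l l = 0).

Let M_symE : [/\ M 1 0 = M 0 1, M 2 0 = M 0 2 & M 2 1 = M 1 2].
Proof. by split; rewrite -[in LHS]M_sym mxE. Qed.

Lemma bform_frame z : D ^+ 2 * bform M z z = 2 * dot (conic_coords M) (cremona z).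
Proof.
have [e1 e2 e3] := M_symE.
have -> : D ^+ 2 * bform M z z = 2 * dot (conic_coords M) (cremona z)
    + bracket z k l ^+ 2 * bform M j j + bracket z l j ^+ 2 * bform M k k
    + bracket z j k ^+ 2 * bform M l l.
  by rewrite /conic_coords /cremona dotE !vec3E !bformE !bracketE e1 e2 e3; ring.
by rewrite Mj Mk Ml; ring.
Qed.

Lemma det_frame : D ^+ 2 * \det M = 2 * prod3 (conic_coords M).
Proof.
have [e1 e2 e3] := M_symE.
have -> : D ^+ 2 * \det M = bform M j j * (bform M k k * bform M l l - bform M k l ^+ 2)
    - bform M j k * (bform M j k * bform M l l - bform M k l * bform M j l)
    + bform M j l * (bform M j k * bform M k l - bform M k k * bform M j l).
  by rewrite det3E !bformE !bracketE e1 e2 e3; ring.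
by rewrite /prod3 /conic_coords !vec3E Mj Mk Ml; ring.
Qed.
End Frame.

End ThreeSpace.

Lemma adj_congruence (R : comNzRingType) n (U N : 'M[R]_n) :
  U *m (\adj U *m N *m (\adj U)^T) *m U^T = \det U ^+ 2 *: N.
Proof.
rewrite !mulmxA mul_mx_adj -!mulmxA -trmx_mul mul_mx_adj tr_scalar_mx.
by rewrite mul_scalar_mx mul_mx_scalar scalerA expr2.
Qed.

Lemma sum_if3 (I : finType) (V : zmodType) (i1 i2 i3 : I) (A B C : V) :
  uniq [:: i1; i2; i3] ->
  \sum_j (if j == i1 then A else if j == i2 then B else if j == i3 then C else 0) = A + B + C.
Proof.
move=> u3; have i12 : i1 != i2 by distinct_from u3.
have i13 : i1 != i3 by distinct_from u3.
have i23 : i2 != i3 by distinct_from u3.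
rewrite (bigD1 i1) //= eqxx (bigD1 i2) /=; last by rewrite eq_sym.
rewrite eqxx eq_sym (negPf i12) (bigD1 i3) /=; last by rewrite ![i3 == _]eq_sym i13 i23.
rewrite eqxx eq_sym (negPf i13) eq_sym (negPf i23) big1 ?addr0 ?addrA // => j.
by case/andP=> /andP[/negPf-> /negPf->] /negPf->.
Qed.

Lemma uniq_card_mem (T : finType) (s : seq T) : uniq s -> size s = #|T| -> forall t, t \in s.
Proof.
move=> s_uniq s_size t; apply/negPn/negP => t_notin.
have := max_card [pred x in t :: s].
by rewrite (card_uniqP _) /= ?t_notin // s_size ltnn.
Qed.

Section RealFrame.
Variable R : realFieldType.
Local Notation vec := 'rV[R]_3.
Implicit Types (u v w x y z : 'rV[R]_3) (M : 'M[R]_3).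

Lemma dot_self_gt0 u : u 0 0 != 0 -> 0 < dot u u.
Proof.
move=> u0; have : 0 < u 0 0 ^+ 2 by rewrite exprn_even_gt0 // u0 orbT.
by have := sqr_ge0 (u 0 1); have := sqr_ge0 (u 0 2); rewrite dotE !expr2; lra.
Qed.

Lemma quad_gt0_neq0 x y u v : 0 < quad x y u v ->
  [/\ bracket x y u != 0, bracket x y v != 0, bracket x u v != 0 & bracket y u v != 0].
Proof.
rewrite /quad => /gt_eqF/negbT; rewrite !mulf_eq0 !negb_or.
by case/andP => /andP[/andP[-> ->] ->] ->.
Qed.

Section Frame.
Variables j k l : vec.
Local Notation D := (bracket j k l).
Local Notation rho := (cremona j k l).
Local Notation beta := (conic_coords j k l).

Lemma conic_coords_orthogonal M z : M^T = M ->
  bform M j j = 0 -> bform M k k = 0 -> bform M l l = 0 -> bform M z z = 0 ->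
  dot (beta M) (rho z) = 0.
Proof.
move=> M_sym Mj Mk Ml Mz; have := bform_frame M_sym Mj Mk Ml z.
by rewrite Mz mulr0 => /esym/eqP; rewrite mulf_eq0 pnatr_eq0 /= => /eqP.
Qed.

Lemma bform_det_frame M m y x : M^T = M ->
  bform M j j = 0 -> bform M k k = 0 -> bform M l l = 0 -> bform M m m = 0 -> bform M y y = 0 ->
  let n := cross (rho m) (rho y) in
  (dot n n * D) ^+ 4 * (bform M x x * \det M)
    = 4 * dot (beta M) n ^+ 4 * (dot n (rho x) * prod3 n).
Proof.
move=> M_sym Mj Mk Ml Mm My n.
have E := dot_prod3_parallel (rho x) (conic_coords_orthogonal M_sym Mj Mk Ml Mm)
  (conic_coords_orthogonal M_sym Mj Mk Ml My).
have -> : (dot n n * D) ^+ 4 * (bform M x x * \det M)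
    = dot n n ^+ 4 * ((D ^+ 2 * bform M x x) * (D ^+ 2 * \det M)) by ring.
rewrite bform_frame // det_frame //.
have -> : dot n n ^+ 4 * (2 * dot (beta M) (rho x) * (2 * prod3 (beta M)))
    = 4 * (dot n n ^+ 4 * (dot (beta M) (rho x) * prod3 (beta M))) by ring.
by rewrite E mulrA.
Qed.

End Frame.

(* In the frame [j, k, l] the two conics correspond to the vectors [n1] and [n2]
   orthogonal to the Cremona images of [m, y], resp. [m, x]; the two values at
   [x] and [y] have opposite signs because [n2 . rho y = - n1 . rho x]. *)
Lemma bform_det_product_le0 j k l m x y M1 M2 :
  bracket j k l != 0 -> bracket m j k != 0 ->
  0 < quad x y k l -> 0 < quad x y l j -> 0 < quad x y j k ->
  0 < quad x y j m -> 0 < quad x y k m -> 0 < quad x y l m ->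
  M1^T = M1 -> [/\ bform M1 j j = 0, bform M1 k k = 0, bform M1 l l = 0,
                   bform M1 m m = 0 & bform M1 y y = 0] ->
  M2^T = M2 -> [/\ bform M2 j j = 0, bform M2 k k = 0, bform M2 l l = 0,
                   bform M2 m m = 0 & bform M2 x x = 0] ->
  bform M1 x x * \det M1 * (bform M2 y y * \det M2)
    * (bracket x y j * bracket x y k * bracket x y l * bracket x y m) <= 0.
Proof.
move=> D_neq0 mjk_neq0 q_kl q_lj q_jk q_jm q_km q_lm.
move=> M1_sym [M1j M1k M1l M1m M1y] M2_sym [M2j M2k M2l M2m M2x].
have /= E1 := bform_det_frame x M1_sym M1j M1k M1l M1m M1y.
have /= E2 := bform_det_frame y M2_sym M2j M2k M2l M2m M2x.
have prod_n := prod3_cross_cremona j k l m x y.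
set n1 := cross _ (cremona j k l y) in E1 E2 prod_n.
set n2 := cross _ (cremona j k l x) in E1 E2 prod_n.
have n21 : dot n2 (cremona j k l y) = - dot n1 (cremona j k l x) by rewrite dot_crossC.
rewrite n21 in E2.
set s := _ * bracket x y m in prod_n *.
have [xyj_neq0 xyk_neq0 xjk_neq0 yjk_neq0] := quad_gt0_neq0 q_jk.
have [xyl_neq0 xym_neq0 xlm_neq0 ylm_neq0] := quad_gt0_neq0 q_lm.
have N1_neq0 : dot n1 n1 != 0.
  by apply/lt0r_neq0/dot_self_gt0; rewrite /n1 cross_cremona vec3E !mulf_neq0.
have N2_neq0 : dot n2 n2 != 0.
  by apply/lt0r_neq0/dot_self_gt0; rewrite /n2 cross_cremona vec3E !mulf_neq0.
have W_gt0 : 0 < (dot n1 n1 * bracket j k l) ^+ 4 * (dot n2 n2 * bracket j k l) ^+ 4 * s ^+ 2.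
  by apply: mulr_gt0; first apply: mulr_gt0; rewrite exprn_even_gt0 //= ?mulf_neq0.
rewrite -(pmulr_rle0 _ W_gt0).
have -> : (dot n1 n1 * bracket j k l) ^+ 4 * (dot n2 n2 * bracket j k l) ^+ 4 * s ^+ 2
    * (bform M1 x x * \det M1 * (bform M2 y y * \det M2) * s)
  = - (4 * dot (conic_coords j k l M1) n1 ^+ 2 * dot (conic_coords j k l M2) n2 ^+ 2
       * dot n1 (cremona j k l x)) ^+ 2 * (prod3 n1 * prod3 n2 * s ^+ 3).
  transitivity ((dot n1 n1 * bracket j k l) ^+ 4 * (bform M1 x x * \det M1)
    * ((dot n2 n2 * bracket j k l) ^+ 4 * (bform M2 y y * \det M2)) * s ^+ 3); first by ring.
  by rewrite E1 E2; ring.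
rewrite prod_n mulNr oppr_le0; apply: mulr_ge0; first exact: sqr_ge0.
apply: mulr_ge0; first exact: sqr_ge0.
by apply/ltW; do 5! (apply: mulr_gt0 => //).
Qed.

End RealFrame.

Section RealPlane.
Variable R : realType.
Local Notation vec := 'rV[R]_3.
Implicit Types (u v w x y z : vec) (M : 'M[R]_3).

Lemma qfE M x : qf M x = bform M x x. Proof. by []. Qed.

Lemma qfZ M c x : qf M (c *: x) = c ^+ 2 * qf M x.
Proof. by rewrite !qfE !bformE !mxE; ring. Qed.

Lemma linD a u v : lin a (u + v) = lin a u + lin a v.
Proof. by rewrite /lin mulmxDl mxE. Qed.

Lemma linZ a c u : lin a (c *: u) = c * lin a u.
Proof. by rewrite /lin -scalemxAl mxE. Qed.

Lemma lin0 (a : vec) : lin a 0 = 0.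
Proof. by rewrite /lin mul0mx mxE. Qed.

Lemma mx3E u v w (i j : 'I_3) :
  mx3 u v w i j = if val i == 0%N then u 0 j else if val i == 1%N then v 0 j else w 0 j.
Proof.
case: i => [[|[|[|//]]] hi] /=.
- rewrite (_ : Ordinal hi = @lshift 1 (1 + 1) 0); last exact/val_inj.
  exact: col_mxEu.
- rewrite (_ : Ordinal hi = @rshift 1 (1 + 1) 0); last exact/val_inj.
  rewrite (col_mxEd u (col_mx v w) 0 j) (_ : (0 : 'I_2) = @lshift 1 1 0); last exact/val_inj.
  exact: col_mxEu.
- rewrite (_ : Ordinal hi = @rshift 1 (1 + 1) 1); last exact/val_inj.
  rewrite (col_mxEd u (col_mx v w) 1 j) (_ : (1 : 'I_2) = @rshift 1 1 0); last exact/val_inj.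
  exact: col_mxEd.
Qed.

Lemma det_mx3 u v w : \det (mx3 u v w) = bracket u v w.
Proof. by rewrite det3E !mx3E /= bracketE; ring. Qed.

Lemma row_mx3 u v w :
  [/\ row 0 (mx3 u v w) = u, row 1 (mx3 u v w) = v & row 2 (mx3 u v w) = w].
Proof. by split; apply/rowP => t; rewrite mxE mx3E. Qed.

End RealPlane.


Section Convexity.
Variable R : realType.
Variables (Y : 'I_7 -> 'rV[R]_3) (a : 'rV[R]_3).
Hypotheses (Y_lin : forall i, lin a (Y i) = 1) (Y_convex : convex_position Y).

Lemma pos_relationF i1 i2 i3 i4 c1 c2 c3 c4 : uniq [:: i1; i2; i3; i4] ->
  0 < c1 -> 0 < c2 -> 0 < c3 ->
  c1 *: Y i1 + c2 *: Y i2 + c3 *: Y i3 + c4 *: Y i4 = 0 -> False.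
Proof.
move=> u4 c1_gt0 c2_gt0 c3_gt0 E.
have sum0 : c1 + c2 + c3 + c4 = 0.
  by have := congr1 (lin a) E; rewrite !linD !linZ !Y_lin lin0 !mulr1.
set t := c1 + c2 + c3 in sum0.
have t_gt0 : 0 < t by rewrite /t !addr_gt0.
have E' : c1 *: Y i1 + c2 *: Y i2 + c3 *: Y i3 = t *: Y i4.
  by apply/eqP; rewrite -subr_eq0 -scaleNr (_ : - t = c4) ?E //; lra.
pose w j := if j == i1 then c1 / t else if j == i2 then c2 / t
            else if j == i3 then c3 / t else 0.
apply: (@Y_convex i4); exists w; split; [|split; [|split]].
- move=> j; rewrite /w.
  by repeat case: ifP => _; rewrite ?lexx // divr_ge0 // ltW.
- by rewrite /w ifN ?ifN ?ifN //; distinct_from u4.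
- by rewrite sum_if3 -?mulrDl ?divff ?lt0r_neq0 //; distinct_from u4.
- rewrite (eq_bigr (fun j => if j == i1 then (c1 / t) *: Y i1 else if j == i2 then (c2 / t) *: Y i2
                           else if j == i3 then (c3 / t) *: Y i3 else 0)); last first.
    by move=> j _; rewrite /w; do 3! (case: eqP => [->|_]) => //; rewrite scale0r.
  rewrite sum_if3; last by distinct_from u4.
  rewrite !(mulrC _ t^-1) -!scalerA -!scalerDr E' scalerA mulVf ?scale1r //.
  exact: lt0r_neq0.
Qed.

Lemma same_sign3_relationF i1 i2 i3 i4 c1 c2 c3 c4 : uniq [:: i1; i2; i3; i4] ->
  same_sign3 c1 c2 c3 ->
  c1 *: Y i1 + c2 *: Y i2 + c3 *: Y i3 + c4 *: Y i4 = 0 -> False.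
Proof.
move=> u4 [[c1_gt0 [c2_gt0 c3_gt0]] | [c1_lt0 [c2_lt0 c3_lt0]]] E.
  exact: (pos_relationF u4 c1_gt0 c2_gt0 c3_gt0 E).
apply: (pos_relationF (c1 := - c1) (c2 := - c2) (c3 := - c3) (c4 := - c4) u4).
1-3: by rewrite oppr_gt0.
by rewrite !scaleNr -!opprD E oppr0.
Qed.

(* By Cramer's rule the four points satisfy a linear relation whose coefficients
   are, up to sign, the four brackets; if their product were negative, three of
   the coefficients would have the same sign, putting a point in the convex hull
   of three others. *)
Lemma convex_quad_gt0 i1 i2 i3 i4 : uniq [:: i1; i2; i3; i4] ->
  quad (Y i1) (Y i2) (Y i3) (Y i4) != 0 -> 0 < quad (Y i1) (Y i2) (Y i3) (Y i4).
Proof.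
move=> u4; rewrite /quad; set A := bracket _ _ (Y i3); set B := bracket (Y i1) (Y i2) _.
set C := bracket (Y i1) (Y i3) _; set D := bracket (Y i2) _ _.
move=> q_neq0; rewrite lt_def q_neq0 /= leNgt; apply/negP => q_lt0.
have E := cramer_relation (Y i1) (Y i2) (Y i3) (Y i4); rewrite -/A -/B -/C -/D in E.
rewrite -!scaleNr in E.
move: q_neq0; rewrite !mulf_eq0 !negb_or => /andP[/andP[/andP[nA nB] nC] nD].
have nC' : - C != 0 by rewrite oppr_eq0.
have nA' : - A != 0 by rewrite oppr_eq0.
have p_lt0 : D * - C * B * - A < 0 by rewrite (_ : D * - C * B * - A = A * B * C * D) //; ring.
case: (prod4_lt0_same_sign3 nD nC' nB nA' p_lt0) => ss.
- exact: (same_sign3_relationF u4 ss E).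
- have u : uniq [:: i1; i2; i4; i3] by distinct_from u4.
  apply: (same_sign3_relationF u ss (c4 := B)).
  by rewrite -[RHS]E; apply: row3P; rewrite !mxE; ring.
- have u : uniq [:: i1; i3; i4; i2] by distinct_from u4.
  apply: (same_sign3_relationF u ss (c4 := - C)).
  by rewrite -[RHS]E; apply: row3P; rewrite !mxE; ring.
- have u : uniq [:: i2; i3; i4; i1] by distinct_from u4.
  apply: (same_sign3_relationF u ss (c4 := D)).
  by rewrite -[RHS]E; apply: row3P; rewrite !mxE; ring.
Qed.

End Convexity.

Section ConicThroughFive.
Variable R : realType.
Variables (I : eqType) (Y : I -> 'rV[R]_3).
Hypothesis Y_nondeg : forall i j k, uniq [:: i; j; k] -> bracket (Y i) (Y j) (Y k) != 0.

Definition offdiag3 (n : 'rV[R]_3) : 'M[R]_3 :=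
  mx3 (vec3 0 (n 0 0) (n 0 1)) (vec3 (n 0 0) 0 (n 0 2)) (vec3 (n 0 1) (n 0 2) 0).

Lemma offdiag3_sym n : (offdiag3 n)^T = offdiag3 n.
Proof. by apply/matrixP => -[[|[|[|//]]] ?] -[[|[|[|//]]] ?]; rewrite mxE !mx3E !mxE. Qed.

(* The conic is the image of the conic with matrix [offdiag3 n] in the frame
   [Y j, Y k, Y l]; [n] is chosen orthogonal to the Cremona images of [Y m] and [Y y]. *)
Lemma conic_through5 j k l m y : uniq [:: j; k; l; m; y] ->
  exists M : 'M[R]_3,
    [/\ M^T = M, \det M != 0 & forall t, t \in [:: j; k; l; m; y] -> qf M (Y t) = 0].
Proof.
move=> u5; set D := bracket (Y j) (Y k) (Y l).
have D_neq0 : D != 0 by apply: Y_nondeg; distinct_from u5.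
set rho := cremona (Y j) (Y k) (Y l).
set n := cross (rho (Y m)) (rho (Y y)).
set U := mx3 (Y j) (Y k) (Y l).
set M := \adj U *m offdiag3 n *m (\adj U)^T.
have M_sym : M^T = M by rewrite /M !trmx_mul trmxK offdiag3_sym mulmxA.
have [U0 U1 U2] := row_mx3 (Y j) (Y k) (Y l).
have MU a b : bform M (row a U) (row b U) = D ^+ 2 * offdiag3 n a b.
  by rewrite -bform_rows adj_congruence mxE det_mx3.
have [Mj Mk Ml] : [/\ qf M (Y j) = 0, qf M (Y k) = 0 & qf M (Y l) = 0].
  by split; rewrite qfE; [have := MU 0 0 | have := MU 1 1 | have := MU 2 2];
    rewrite ?U0 ?U1 ?U2 mx3E /= vec3E mulr0.
have beta_n : conic_coords (Y j) (Y k) (Y l) M = D ^+ 2 *: n.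
  apply: row3P; rewrite /conic_coords !vec3E mxE.
  - by have := MU 0 1; rewrite U0 U1 mx3E /= vec3E.
  - by have := MU 0 2; rewrite U0 U2 mx3E /= vec3E.
  - by have := MU 1 2; rewrite U1 U2 mx3E /= vec3E.
have Mz z : dot n (rho z) = 0 -> qf M z = 0.
  move=> nz; have := bform_frame M_sym Mj Mk Ml z.
  rewrite beta_n dotZl nz !mulr0 -qfE => /eqP.
  by rewrite mulf_eq0 expf_eq0 (negPf D_neq0) andbF => /eqP.
have Mm := Mz _ (dot_cross_l _ _); have My := Mz _ (dot_cross_r _ _).
have n_neq0 : prod3 n != 0.
  rewrite /n cross_cremona /prod3 !vec3E.
  by rewrite !mulf_neq0 // Y_nondeg //; distinct_from u5.
have detM : D ^+ 2 * \det M = 2 * ((D ^+ 2) ^+ 3 * prod3 n).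
  by rewrite det_frame // beta_n prod3Z.
exists M; split => //.
  have : 2 * ((D ^+ 2) ^+ 3 * prod3 n) != 0.
    by rewrite mulf_neq0 ?pnatr_eq0 // mulf_neq0 // !expf_neq0.
  by apply: contraNneq => det0; rewrite -detM det0 mulr0.
by move=> t; rewrite !inE => /orP[/eqP->|/orP[/eqP->|/orP[/eqP->|/orP[/eqP->|/eqP->]]]].
Qed.

End ConicThroughFive.

Section Dominance.
Variable R : realType.
Variables (P : 'I_7 -> 'rV[R]_3) (a : 'rV[R]_3).
Hypotheses (P_typical : typical P) (P_lin : forall i, lin a (P i) <> 0).
Let Y i := chart a (P i).
Hypothesis Y_convex : convex_position Y.

Lemma lin_chart i : lin a (Y i) = 1.
Proof. by rewrite /Y /chart linZ mulVf //; apply/eqP. Qed.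

Lemma chartK i : lin a (P i) *: Y i = P i.
Proof. by rewrite /Y /chart scalerA divff ?scale1r //; apply/eqP. Qed.

Lemma qf_chart M i : qf M (P i) = lin a (P i) ^+ 2 * qf M (Y i).
Proof. by rewrite -{1}chartK qfZ. Qed.

Lemma qf_chart_eq0 M i : (qf M (P i) == 0) = (qf M (Y i) == 0).
Proof. by rewrite qf_chart mulf_eq0 expf_eq0 /=; case: eqP => // /P_lin. Qed.

Lemma qf_chart_lt0 M c i : (qf M (P i) * c < 0) = (qf M (Y i) * c < 0).
Proof.
by rewrite qf_chart -mulrA pmulr_rlt0 // exprn_even_gt0 //=; apply/eqP/P_lin.
Qed.

Lemma chart_nondeg i j k : uniq [:: i; j; k] -> bracket (Y i) (Y j) (Y k) != 0.
Proof.
move=> u3; case: P_typical => _ [P_noncol _].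
have /eqP ij : i != j by distinct_from u3.
have /eqP jk : j != k by distinct_from u3.
have /eqP ik : i != k by distinct_from u3.
apply/eqP => Y0; apply: (P_noncol i j k ij jk ik).
by rewrite /collinear3 det_mx3 -(chartK i) -(chartK j) -(chartK k) bracketZ Y0 mulr0.
Qed.

Lemma chart_quad_gt0 i1 i2 i3 i4 : uniq [:: i1; i2; i3; i4] ->
  0 < quad (Y i1) (Y i2) (Y i3) (Y i4).
Proof.
move=> u4; apply: (convex_quad_gt0 lin_chart Y_convex u4).
by rewrite /quad !mulf_neq0 // chart_nondeg //; distinct_from u4.
Qed.

Lemma mem_others (s : seq 'I_7) x q : uniq (x :: q :: s) -> size s = 5%N ->
  forall t, t != x -> t != q -> t \in s.
Proof.
move=> u7 s5 t tx tq; have := uniq_card_mem u7 _ t.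
by rewrite !inE (negPf tx) (negPf tq) card_ord /= s5 => ->.
Qed.

Lemma inside_of_not_outside_Q x q j k l m y : uniq [:: x; q; j; k; l; m; y] ->
  ~ outside_Q P x q ->
  exists M : 'M[R]_3, [/\ M^T = M, forall t, t != x -> t != q -> qf M (P t) = 0
                        & 0 < qf M (Y x) * \det M].
Proof.
move=> u7 not_out; have u5 : uniq [:: j; k; l; m; y] by distinct_from u7.
have [M [M_sym detM_neq0 M5]] := conic_through5 chart_nondeg u5.
have M0 t : t != x -> t != q -> qf M (P t) = 0.
  by move=> tx tq; apply/eqP; rewrite qf_chart_eq0 M5 // (mem_others u7).
have M_conic : is_conic M by split=> // M0'; move: detM_neq0; rewrite M0' det0 eqxx.
have Mx_neq0 : qf M (Y x) != 0.
  apply/eqP => Mx0; case: P_typical => _ [_ no_six]; apply: (no_six q M M_conic) => t /eqP tq.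
  have [->|tx] := eqVneq t x; last exact: M0.
  by apply/eqP; rewrite qf_chart_eq0 Mx0.
exists M; split=> //; rewrite lt_def mulf_neq0 //= leNgt; apply/negP => Mx_lt0.
apply: not_out; exists M; split=> //; split; first by move=> t /eqP tx /eqP tq; exact: M0.
by split; [exact/eqP | rewrite qf_chart_lt0].
Qed.

Lemma outside_Q_xor p p' q j k l m : uniq [:: p; p'; q; j; k; l; m] ->
  0 < bracket (Y p) (Y p') (Y j) * bracket (Y p) (Y p') (Y k)
      * bracket (Y p) (Y p') (Y l) * bracket (Y p) (Y p') (Y m) ->
  outside_Q P p q <-> ~ outside_Q P p' q.
Proof.
move=> u7 s_gt0.
have sign M1 M2 : M1^T = M1 -> M2^T = M2 ->
    (forall t, t != p -> t != q -> qf M1 (P t) = 0) ->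
    (forall t, t != p' -> t != q -> qf M2 (P t) = 0) ->
    qf M1 (Y p) * \det M1 * (qf M2 (Y p') * \det M2) <= 0.
  move=> M1_sym M2_sym M1_0 M2_0; rewrite -(pmulr_lle0 _ s_gt0).
  have Y0 (M : 'M[R]_3) t : qf M (P t) = 0 -> qf M (Y t) = 0.
    by move/eqP; rewrite qf_chart_eq0 => /eqP.
  apply: bform_det_product_le0 => //.
  1-2: by apply: chart_nondeg; distinct_from u7.
  1-6: by apply: chart_quad_gt0; distinct_from u7.
  - by split; apply: Y0; apply: M1_0; distinct_from u7.
  - by split; apply: Y0; apply: M2_0; distinct_from u7.
split.
- move=> [M1 [[M1_sym _] [M1_0 [_ M1_lt0]]]] [M2 [[M2_sym _] [M2_0 [_ M2_lt0]]]].
  rewrite qf_chart_lt0 in M1_lt0; rewrite qf_chart_lt0 in M2_lt0.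
  have M1_0' t : t != p -> t != q -> qf M1 (P t) = 0 by move=> /eqP tp /eqP; exact: M1_0.
  have M2_0' t : t != p' -> t != q -> qf M2 (P t) = 0 by move=> /eqP tp /eqP; exact: M2_0.
  have := sign M1 M2 M1_sym M2_sym M1_0' M2_0'.
  by rewrite leNgt (nmulr_rgt0 _ M1_lt0) M2_lt0.
- move=> not_out'; apply: contrapT => not_out.
  have u1 : uniq [:: p; q; j; k; l; m; p'] by distinct_from u7.
  have u2 : uniq [:: p'; q; j; k; l; m; p] by distinct_from u7.
  have [M1 [M1_sym M1_0 M1_gt0]] := inside_of_not_outside_Q u1 not_out.
  have [M2 [M2_sym M2_0 M2_gt0]] := inside_of_not_outside_Q u2 not_out'.
  by have := sign M1 M2 M1_sym M2_sym M1_0 M2_0; rewrite leNgt mulr_gt0.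
Qed.

Lemma exists_outside_Q_xor p p' : p != p' ->
  exists q, [/\ q != p, q != p' & outside_Q P p q <-> ~ outside_Q P p' q].
Proof.
move=> pp'; set s := enum [set t : 'I_7 | (t != p) && (t != p')].
have s_mem t : (t \in s) = (t != p) && (t != p') by rewrite mem_enum inE.
have s_size : size s = 5%N.
  rewrite -cardE (_ : [set t | _] = [set~ p] :\ p'); last by apply/setP => t; rewrite !inE andbC.
  have := cardsC1 p; rewrite card_ord (cardsD1 p') !inE eq_sym (negPf pp') add1n.
  by case.
pose f t := bracket (Y p) (Y p') (Y t).
have [q qs rem_gt0] : exists2 q, q \in s & 0 < \prod_(t <- rem q s) f t.
  apply: exists_rem_prod_gt0; first by rewrite s_size.
  by apply/allP => t; rewrite s_mem => /andP[tp tp']; apply: chart_nondeg; distinct_from pp'.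
have /andP[qp qp'] : (q != p) && (q != p') by rewrite -s_mem.
have e := perm_to_rem qs.
have u7 : uniq (p :: p' :: q :: rem q s).
  have u_qr : uniq (q :: rem q s) by rewrite -(perm_uniq e) enum_uniq.
  have pqr : p \notin q :: rem q s by rewrite -(perm_mem e) s_mem eqxx.
  have p'qr : p' \notin q :: rem q s by rewrite -(perm_mem e) s_mem eqxx andbF.
  by rewrite cons_uniq in_cons negb_or pp' pqr cons_uniq p'qr u_qr.
have r_size : size (rem q s) = 4%N by rewrite size_rem // s_size.
exists q; split=> //.
case: (rem q s) r_size u7 rem_gt0 => [|j [|k [|l [|m [|? ?]]]]] // _ u7.
rewrite !big_cons big_nil mulr1 !mulrA; exact: outside_Q_xor.
Qed.

End Dominance.

Lemma dominance6_outside_Q (R : realType) (P : 'I_7 -> 'rV[R]_3) p :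
  dominance P p = 6%N -> forall q, q != p -> outside_Q P p q.
Proof.
rewrite /dominance; set A := [set q | _] => A6 q qp.
have sub : A \subset [set~ p] by apply/subsetP => x; rewrite !inE => /andP[].
have /eqP AE : A == [set~ p] by rewrite eqEcard sub cardsC1 card_ord A6.
have : q \in A by rewrite AE !inE.
by rewrite inE => /andP[_ /asboolP].
Qed.

Lemma dominance0_not_outside_Q (R : realType) (P : 'I_7 -> 'rV[R]_3) p :
  dominance P p = 0%N -> forall q, q != p -> ~ outside_Q P p q.
Proof.
rewrite /dominance; set A := [set q | _] => /eqP; rewrite cards_eq0 => /eqP A0 q qp out.
have : q \in A by rewrite inE qp; apply/asboolP.
by rewrite A0 inE.
Qed.

Theorem lemma3p2 (R : realType) (P : 'I_7 -> 'rV[R]_3) :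
  typical P -> heptagonal P ->
  (forall p1 p2 : 'I_7, dominance P p1 = 6%N -> dominance P p2 = 6%N -> p1 = p2) /\
  (forall p1 p2 : 'I_7, dominance P p1 = 0%N -> dominance P p2 = 0%N -> p1 = p2).
Proof.
move=> P_typical [a [P_lin P_convex]].
split=> p1 p2 d1 d2; apply/eqP/negPn/negP => p12;
  have [q [qp1 qp2 xor]] := exists_outside_Q_xor P_typical P_lin P_convex p12.
- exact: (xor.1 (dominance6_outside_Q d1 qp1) (dominance6_outside_Q d2 qp2)).
- exact: (dominance0_not_outside_Q d1 qp1 (xor.2 (dominance0_not_outside_Q d2 qp2))).
Qed.
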